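(* Let $h$ be a non-degenerate symmetric $(0,2)$-tensor field and let $J_1,J_2$ be $h$-symmetric $(1,1)$-tensor fields on a smooth manifold $M$ such that $J_1J_2=J_2J_1$ and $(J_1-J_2)^2=0$. Define endomorphisms of $TM\oplus T^*M$ by $\hat J_-(X+\eta)=J_1X-(J_1^2+I)h^{-1}(\eta)+h(X)-J_1^*\eta$ and $\hat J_+(X+\eta)=J_2X-(J_2^2-I)h^{-1}(\eta)+h(X)-J_2^*\eta$. Then $\hat J_-^2=-I$, $\hat J_+^2=I$ and $\hat J_-\hat J_+=-\hat J_+\hat J_-$, so that $(\hat J_-,\hat J_+,\hat J_-\hat J_+)$ is a generalized almost para-quaternionic structure on $M$.
   Context: $h$ is viewed as the isomorphism $TM\to T^*M$, $X\mapsto h(X,\cdot)$, with inverse $h^{-1}$; $(J^*\eta)(X)=\eta(JX)$; $J$ is $h$-symmetric if $h(JX,Y)=h(X,JY)$. *)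

(* Pointwise (fibrewise) linear algebra on T_pM ⊕ T_p^*M,
   with T_pM identified with column vectors 'cV[R]_n via a basis and T_p^*M
   with column vectors of coefficients in the dual basis. *)
From HB Require Import structures.
From mathcomp Require Import all_boot all_order all_algebra.
From mathcomp Require Import reals.
Set Implicit Arguments. Unset Strict Implicit. Unset Printing Implicit Defensive.
Import GRing.Theory Num.Theory.
Local Open Scope ring_scope.

(* A (0,2)-tensor h at a point is a matrix: h(X,Y) = X^T h Y. *)
Definition pilot_symmetric (R : realType) n (h : 'M[R]_n) : Prop := h^T = h.
Definition pilot_nondegenerate (R : realType) n (h : 'M[R]_n) : Prop := h \in unitmx.

Definition pilot_h_symmetric (R : realType) n (h J : 'M[R]_n) : Prop :=
  forall X Y : 'cV[R]_n, (J *m X)^T *m h *m Y = X^T *m h *m (J *m Y).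

(* The endomorphism of T M ⊕ T^* M (block column vector [X; eta])
     X + eta |-> (J X - (J^2 + eps I) h^{-1}(eta)) + (h(X) - J^* eta),
   where h(X) = h *m X (the covector h(X,.)), h^{-1} = invmx h,
   and J^* eta = J^T *m eta (since (J^* eta)(X) = eta(JX)). *)
Definition Jhat (R : realType) n (eps : R) (h J : 'M[R]_n) : 'M[R]_(n + n) :=
  block_mx J (- ((J *m J + eps%:M) *m invmx h)) h (- J^T).

Definition Jminus (R : realType) n (h J1 : 'M[R]_n) := Jhat 1 h J1.
Definition Jplus (R : realType) n (h J2 : 'M[R]_n) := Jhat (-1) h J2.

Definition gen_almost_paraquaternionic (R : realType) m (I1 I2 I3 : 'M[R]_m) : Prop :=
  [/\ I1 *m I1 = - 1%:M, I2 *m I2 = 1%:M, I1 *m I2 = - (I2 *m I1)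
    & I3 = I1 *m I2].

(** Conjugating by [diag(1, h)], i.e. passing to the frame [X + h^-1 eta],
    turns [Jhat eps h J] into [[J, -(J^2 + eps)], [1, -J]]: the [h]-symmetry
    of [J] is exactly [h^-1 J^T h = J].  For this block matrix the identities
    are direct computations: its square is [-eps], and in the anticommutator of
    the matrices built from [(1, J1)] and [(-1, J2)] the diagonal blocks add up
    to [-(J1 - J2)^2] while the off-diagonal ones cancel as [J1 J2 = J2 J1]. *)
From HB Require Import structures.
From mathcomp Require Import all_boot all_order all_algebra.
From mathcomp Require Import reals.
Import GRing.Theory Num.Theory.
Local Open Scope ring_scope.

Definition Jhat_std {R : comPzRingType} {n} (eps : R) (J : 'M[R]_n) : 'M[R]_(n + n) :=
  block_mx J (- (J *m J + eps%:M)) 1%:M (- J).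

Lemma Jhat_std_sqr (R : comPzRingType) n (eps : R) (J : 'M[R]_n) :
  Jhat_std eps J *m Jhat_std eps J = - eps%:M.
Proof.
rewrite mulmx_block (scalar_mx_block n n) opp_block_mx oppr0 !mulmx1 !mul1mx.
rewrite !mulmxN !mulNmx opprK mulmxDl mulmxDr mulmxA scalar_mxC.
congr block_mx.
- by rewrite opprD addrA subrr add0r.
- exact: addNr.
- exact: subrr.
- by rewrite opprD opprK addrAC addNr add0r.
Qed.

Lemma Jhat_std_anticomm (R : comPzRingType) n (eps : R) (A B : 'M[R]_n) :
  A *m B = B *m A -> (A - B) *m (A - B) = 0 ->
  Jhat_std eps A *m Jhat_std (- eps) B = - (Jhat_std (- eps) B *m Jhat_std eps A).
Proof.
move=> cAB nilAB.
have cross : A *m B + B *m A = A *m A + B *m B.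
  apply/eqP; rewrite -subr_eq0 -oppr_eq0 -nilAB mulmxBl !mulmxBr.
  by rewrite !opprB opprD addrACA.
apply: subr0_eq; rewrite opprK !mulmx_block add_block_mx.
rewrite -[0](block_mx_const n n n n 0).
rewrite !mulmx1 !mul1mx !mulmxN !mulNmx !opprK !mulmxDl !mulmxDr raddfN /=.
rewrite !mulmxN !mulNmx -!scalar_mxC.
f_equal.
- by rewrite addrACA cross -opprD addrACA subrr addr0 subrr.
- have -> : A *m (B *m B) = B *m B *m A by rewrite mulmxA cAB -mulmxA cAB mulmxA.
  have -> : A *m A *m B = B *m (A *m A) by rewrite -mulmxA cAB mulmxA cAB -mulmxA.
  by rewrite addrACA -opprD [X in _ + X]addrC addNr.
- by rewrite -opprB addNr.
- by rewrite addrACA addrC cross -opprD addrACA addNr addr0 [B *m B + _]addrC subrr.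
Qed.

Lemma eq_bilinear_mx (R : pzRingType) n (A B : 'M[R]_n) :
  (forall X Y : 'cV[R]_n, X^T *m A *m Y = X^T *m B *m Y) -> A = B.
Proof.
move=> eqAB; apply/matrixP=> i j.
have := eqAB (delta_mx i 0) (delta_mx j 0).
rewrite trmx_delta => /matrixP /(_ 0 0).
by rewrite -!rowE -!colE !mxE.
Qed.

Lemma h_symmetric_trmx (R : realType) n (h J : 'M[R]_n) :
  pilot_h_symmetric h J -> J^T *m h = h *m J.
Proof.
by move=> hJ; apply: eq_bilinear_mx => X Y; rewrite !mulmxA -trmx_mul hJ !mulmxA.
Qed.

Lemma conj_mulmx (R : comUnitRingType) n (P A B : 'M[R]_n) : P \in unitmx ->
  (P *m A *m invmx P) *m (P *m B *m invmx P) = P *m (A *m B) *m invmx P.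
Proof. by move=> uP; rewrite !mulmxA mulmxKV // -!mulmxA. Qed.

Lemma conj_scalar_mx (R : comUnitRingType) n (P : 'M[R]_n) (a : R) :
  P \in unitmx -> P *m a%:M *m invmx P = a%:M.
Proof. by move=> uP; rewrite scalar_mxC -mulmxA mulmxV ?mulmx1. Qed.

Section Jhat.

Variables (R : realType) (n : nat) (h : 'M[R]_n).
Hypothesis h_unit : h \in unitmx.

Let D : 'M[R]_(n + n) := block_mx 1%:M 0 0 h.

Let D_unit : D \in unitmx.
Proof. by rewrite block_diag_mx_unit unitmx1. Qed.

Lemma Jhat_conj (eps : R) (J : 'M[R]_n) : J^T *m h = h *m J ->
  Jhat eps h J = D *m Jhat_std eps J *m invmx D.
Proof.
move=> hJ; have trJ : J^T = h *m J *m invmx h by rewrite -hJ mulmxK.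
rewrite invmx_block_diag ?D_unit // invmx1 !mulmx_block.
rewrite !mul1mx !mulmx1 !mulmx0 !mul0mx !addr0 !add0r mulmxN mulNmx.
by rewrite /Jhat trJ mulNmx.
Qed.

Lemma Jhat_sqr (eps : R) (J : 'M[R]_n) : J^T *m h = h *m J ->
  Jhat eps h J *m Jhat eps h J = - eps%:M.
Proof.
move=> hJ; rewrite Jhat_conj // conj_mulmx // Jhat_std_sqr.
by rewrite mulmxN mulNmx conj_scalar_mx.
Qed.

Lemma Jhat_anticomm (eps : R) (A B : 'M[R]_n) :
  A^T *m h = h *m A -> B^T *m h = h *m B ->
  A *m B = B *m A -> (A - B) *m (A - B) = 0 ->
  Jhat eps h A *m Jhat (- eps) h B = - (Jhat (- eps) h B *m Jhat eps h A).
Proof.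
move=> hA hB cAB nilAB; rewrite !Jhat_conj // !conj_mulmx //.
by rewrite Jhat_std_anticomm // mulmxN mulNmx.
Qed.

End Jhat.

Theorem proposition3p1 (R : realType) (n : nat) (h J1 J2 : 'M[R]_n) :
  pilot_symmetric h -> pilot_nondegenerate h ->
  pilot_h_symmetric h J1 -> pilot_h_symmetric h J2 ->
  J1 *m J2 = J2 *m J1 ->
  (J1 - J2) *m (J1 - J2) = 0 ->
  [/\ Jminus h J1 *m Jminus h J1 = - 1%:M,
      Jplus h J2 *m Jplus h J2 = 1%:M,
      Jminus h J1 *m Jplus h J2 = - (Jplus h J2 *m Jminus h J1)
    & gen_almost_paraquaternionic (Jminus h J1) (Jplus h J2)
        (Jminus h J1 *m Jplus h J2)].
Proof.
move=> _ h_unit /h_symmetric_trmx hJ1 /h_symmetric_trmx hJ2 cJ nilJ.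
have sqrM : Jminus h J1 *m Jminus h J1 = - 1%:M by exact: Jhat_sqr.
have sqrP : Jplus h J2 *m Jplus h J2 = 1%:M.
  by rewrite /Jplus Jhat_sqr // raddfN opprK.
have anti : Jminus h J1 *m Jplus h J2 = - (Jplus h J2 *m Jminus h J1).
  exact: Jhat_anticomm.
by split=> //; split.
Qed.
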